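(* Let $U=\{u_1,\dots,u_{2^m}\}\subseteq\mathbb{F}_2^n\setminus\{0\}$ be a set of $2^m$ distinct nonzero vectors, and let $B:\mathbb{F}_2^n\to\mathbb{F}_2^m$ be a uniformly random linear map. Fix $y\in\mathbb{F}_2^m$ and define $Z_y:=|\{i: Bu_i=y\}|$. Then for every integer $r\ge 0$, with $a=\lceil\log(r+2)\rceil$, \[ \Pr[Z_y>r]\le\left(\prod_{j=0}^{a-1}(r+2-2^j)\right)^{-1}. \]
   Context: $\log$ denotes the base-$2$ logarithm. A uniformly random linear map $\mathbb{F}_2^n\to\mathbb{F}_2^m$ is one chosen uniformly among all linear maps. *)

From mathcomp Require Import all_boot all_order all_algebra.
Set Implicit Arguments. Unset Strict Implicit. Unset Printing Implicit Defensive.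
Import GRing.Theory Num.Theory.

(* Vectors of F_2^n are column vectors 'cV['F_2]_n; a linear map
   F_2^n -> F_2^m is (uniquely) a matrix B : 'M['F_2]_(m, n) acting by B *m u.
   A uniformly random linear map = uniform distribution on the finite type
   'M['F_2]_(m, n). *)

(* Z_y(B) = #{ u in U | B u = y } (U is a set, its elements are the distinct u_i). *)
Definition Zy (m n : nat) (U : {set 'cV['F_2]_n}) (y : 'cV['F_2]_m)
  (B : 'M['F_2]_(m, n)) : nat := #|[set u in U | (B *m u)%R == y]|.

Definition prob_Zy_gt (m n : nat) (U : {set 'cV['F_2]_n}) (y : 'cV['F_2]_m)
  (r : nat) : rat :=
  (#|[set B : 'M['F_2]_(m, n) | (r < Zy U y B)%N]|%:R / #|{: 'M['F_2]_(m, n)}|%:R)%R.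

Definition ceil_log2 (k : nat) : nat := up_log 2 k.

(* If more than r of the u_i lie in the fibre B^-1(y), then that fibre contains at
   least prod_(j < a) (r + 2 - 2^j) frames of length a, i.e. linearly independent
   a-tuples of vectors of U: once j of them are chosen, they span only 2^j - 1 nonzero
   vectors.  Conversely, a fixed frame of U lies in B^-1(y) for exactly a 2^(-ma)
   fraction of the maps B, and U has at most |U|^a = 2^(ma) frames of length a, so the
   expected number of frames of U inside B^-1(y) is at most 1.  Markov's inequality
   concludes. *)

From mathcomp Require Import all_boot all_order all_algebra zify.
Set Implicit Arguments. Unset Strict Implicit. Unset Printing Implicit Defensive.
Import GRing.Theory Num.Theory.
Local Open Scope ring_scope.

Lemma ltn_expn_up_log p k j : (1 < p)%N -> (j < up_log p k)%N -> (p ^ j < k)%N.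
Proof. by move=> p_gt1; apply: contraTT; rewrite -!leqNgt; apply: up_log_min. Qed.

Lemma row_free_col_mx (F : fieldType) n j (v : 'rV[F]_n) (A : 'M_(j, n)) :
  row_free A -> ~~ (v <= A)%MS -> row_free (col_mx v A).
Proof.
move=> freeA vA; rewrite /row_free eqn_leq rank_leq_row /=.
rewrite -(leq_add2r (\rank (v :&: A))) -addsmxE mxrank_sum_cap (eqnP freeA).
have rank_v : \rank v = 1%N.
  by rewrite rank_rV (contraNneq _ vA) // => ->; rewrite sub0mx.
have : (\rank (v :&: A) < \rank v)%N.
  by rewrite (ltn_leqif (mxrank_leqif_sup (capmxSl v A))) sub_capmx submx_refl.
by rewrite rank_v; lia.
Qed.

Section Frames.
Variable F : finFieldType.

Definition frames n (S : {set 'cV[F]_n}) j : {set 'M[F]_(j, n)} :=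
  [set A | row_free A && [forall i, (row i A)^T \in S]].

Lemma framesS n (S T : {set 'cV[F]_n}) j :
  S \subset T -> frames S j \subset frames T j.
Proof.
move=> /subsetP sST; apply/subsetP => A; rewrite !inE => /andP[-> /forallP rowsA].
by apply/forallP => i; apply: sST.
Qed.

Lemma card_frames_le n (S : {set 'cV[F]_n}) j : (#|frames S j| <= #|S| ^ j)%N.
Proof.
pose rows (A : 'M[F]_(j, n)) := [ffun i => (row i A)^T].
have rows_inj : injective rows.
  move=> A B /ffunP eqAB; apply/row_matrixP => i.
  by apply: trmx_inj; have := eqAB i; rewrite !ffunE.
rewrite -(card_imset _ rows_inj) -[j in (_ ^ j)%N]card_ord -card_ffun_on.
apply/subset_leq_card/subsetP => _ /imsetP[A + ->].
by rewrite inE => /andP[_ /forallP rowsA]; apply/ffun_onP => i; rewrite ffunE.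
Qed.

Lemma card_span_nonzero_le n j (A : 'M[F]_(j, n)) (S : {set 'cV[F]_n}) :
  0 \notin S -> (#|[set v in S | (v^T <= A)%MS]| <= #|F| ^ j - 1)%N.
Proof.
move=> S0.
have span_sub : [set v in S | (v^T <= A)%MS] \subset
    (fun x : 'rV_j => (x *m A)^T) @: [set~ 0].
  apply/subsetP => v; rewrite inE => /andP[vS /submxP[x def_v]].
  apply/imsetP; exists x; last by rewrite -def_v trmxK.
  rewrite !inE; apply: contraNneq S0 => x0.
  by rewrite -[v]trmxK def_v x0 mul0mx trmx0 in vS.
apply: leq_trans (subset_leq_card span_sub) _.
by rewrite (leq_trans (leq_imset_card _ _)) // cardsC1 card_mx mul1n subn1.
Qed.

Lemma col_mx_frames n j (S : {set 'cV[F]_n}) (A : 'M_(j, n)) v :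
  A \in frames S j -> v \in S -> ~~ (v^T <= A)%MS -> col_mx v^T A \in frames S (1 + j).
Proof.
rewrite !inE => /andP[freeA /forallP rowsA] vS vA.
rewrite row_free_col_mx //=; apply/forallP => i; rewrite -(splitK i).
by case: (split i) => k /=; rewrite ?rowKu ?rowKd ?row_id ?trmxK.
Qed.

Lemma card_frames_ge n (S : {set 'cV[F]_n}) j : 0 \notin S ->
  (\prod_(i < j) (#|S| + 1 - #|F| ^ i) <= #|frames S j|)%N.
Proof.
move=> S0; elim: j => [|j IHj].
  rewrite big_ord0 card_gt0; apply/set0Pn; exists 0.
  by rewrite inE /row_free mxrank0; apply/forallP => -[].
rewrite big_ord_recr /=.
pose span (A : 'M[F]_(j, n)) := [set v : 'cV[F]_n | (v^T <= A)%MS].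
pose ext (p : 'M[F]_(j, n) * 'cV[F]_n) : 'M[F]_(1 + j, n) := col_mx p.2^T p.1.
pose P := [set p | (p.1 \in frames S j) && (p.2 \in S :\: span p.1)].
have ext_inj : injective ext by move=> [A v] [B w] /eq_col_mx[/trmx_inj /= -> ->].
have ext_sub : ext @: P \subset frames S (1 + j).
  apply/subsetP => _ /imsetP[[A v] /setIdP[/= fA /setDP[vS]] + ->].
  by rewrite inE; apply: col_mx_frames.
have card_P : #|P| = (\sum_(A in frames S j) #|S :\: span A|)%N.
  rewrite -sum1_card (eq_bigl _ _ (fun p => in_set _ p)).
  rewrite -(pair_big_dep (mem (frames S j)) (fun A v => v \in S :\: span A) (fun _ _ => 1%N)).
  by apply: eq_bigr => A _; rewrite sum1_card.
have card_new : forall A, (#|S| + 1 - #|F| ^ j <= #|S :\: span A|)%N.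
  move=> A; have := card_span_nonzero_le A S0.
  rewrite -(cardsID (span A) S) (_ : [set v in S | _] = S :&: span A).
    have : (0 < #|F| ^ j)%N by rewrite expn_gt0; apply/orP; left; apply/card_gt0P; exists 0.
    by move: (#|F| ^ j)%N #|S :&: span A| #|S :\: span A| => q x y; lia.
  by apply/setP => v; rewrite !inE.
apply: leq_trans (subset_leq_card ext_sub).
rewrite card_imset // card_P; apply: leq_trans (leq_mul IHj (leqnn _)) _.
by rewrite -sum_nat_const leq_sum.
Qed.

Lemma card_fibre_mulmx_tr m n a (A : 'M[F]_(a, n)) (Y : 'M[F]_(m, a)) : row_free A ->
  (#|{: 'M[F]_(m, a)}| * #|[set B : 'M[F]_(m, n) | B *m A^T == Y]|)%N = #|{: 'M[F]_(m, n)}|.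
Proof.
case/row_freeP => C AC.
have fibreE Z : #|[set B : 'M[F]_(m, n) | B *m A^T == Z]| =
                #|[set B : 'M[F]_(m, n) | B *m A^T == 0]|.
  have B0A : Z *m C^T *m A^T = Z by rewrite -mulmxA -trmx_mul AC trmx1 mulmx1.
  rewrite -[RHS](card_preimset _ (addIr (- (Z *m C^T)))).
  by apply: eq_card => B; rewrite !inE mulmxDl mulNmx B0A subr_eq0.
transitivity (\sum_(Z : 'M[F]_(m, a)) #|[set B : 'M[F]_(m, n) | B *m A^T == Z]|)%N.
  by rewrite (fibreE Y) -sum_nat_const; apply: eq_bigr => Z _; rewrite fibreE.
rewrite -sum1_card (partition_big (fun B => B *m A^T) predT) //.
by apply: eq_bigr => Z _; rewrite sum1dep_card.
Qed.

Lemma sum_card_frames_fibre m n a (U : {set 'cV[F]_n}) (Y : 'M[F]_(m, a)) :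
  (#|{: 'M[F]_(m, a)}| *
     \sum_(B : 'M[F]_(m, n)) #|[set A in frames U a | B *m A^T == Y]|)%N
  = (#|frames U a| * #|{: 'M[F]_(m, n)}|)%N.
Proof.
under eq_bigr do rewrite -sum1dep_card.
rewrite (exchange_big_dep (mem (frames U a))) => [/=|B A _ /andP[] //].
rewrite big_distrr -sum_nat_const /=; apply: eq_bigr => A frameA.
have freeA : row_free A by move: frameA; rewrite inE => /andP[].
rewrite -(card_fibre_mulmx_tr Y freeA) sum1dep_card; congr (_ * #|_|)%N.
by rewrite frameA.
Qed.

Lemma frames_fibre_sub m n a (U : {set 'cV[F]_n}) (B : 'M[F]_(m, n)) (y : 'cV[F]_m) :
  frames [set u in U | B *m u == y] a \subset
  [set A in frames U a | B *m A^T == \matrix_(i, k) y i 0].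
Proof.
apply/subsetP => A frameA; rewrite inE.
rewrite (subsetP (framesS _ _) _ frameA) /=; last first.
  by apply/subsetP => u; rewrite inE => /andP[].
move: frameA; rewrite inE => /andP[_ /forallP rowsA].
apply/eqP/trmx_inj/row_matrixP => k.
have /setIdP[_ /eqP <-] := rowsA k.
by apply/rowP => j; rewrite !mxE; apply: eq_bigr => l _; rewrite !mxE.
Qed.

Lemma card_large_fibre_mul_prod_le m n (U : {set 'cV[F]_n}) (y : 'cV[F]_m) a k :
  0 \notin U -> (#|U| ^ a <= #|{: 'M[F]_(m, a)}|)%N ->
  (#|[set B : 'M[F]_(m, n) | k <= #|[set u in U | B *m u == y]|]| *
     \prod_(i < a) (k + 1 - #|F| ^ i) <= #|{: 'M[F]_(m, n)}|)%N.
Proof.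
move=> U0 card_U; set Y : 'M[F]_(m, a) := \matrix_(i, j) y i 0.
have large_fibre B : (k <= #|[set u in U | B *m u == y]|)%N ->
    (\prod_(i < a) (k + 1 - #|F| ^ i) <= #|[set A in frames U a | B *m A^T == Y]|)%N.
  move=> large; apply: leq_trans (subset_leq_card (frames_fibre_sub a U B y)).
  apply: leq_trans (card_frames_ge _ _); last by rewrite inE negb_and U0.
  by apply: leq_prod => i _; rewrite leq_sub2r ?leq_add2r.
have M_gt0 : (0 < #|{: 'M[F]_(m, a)}|)%N by apply/card_gt0P; exists 0.
set rich := [set B | _]; rewrite -sum_nat_const -(leq_pmul2l M_gt0).
apply: (@leq_trans (#|{: 'M[F]_(m, a)}| *
          \sum_(B : 'M[F]_(m, n)) #|[set A in frames U a | B *m A^T == Y]|)).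
  rewrite leq_pmul2l // [X in (_ <= X)%N](bigID (mem rich)) /=.
  by apply: leq_trans (leq_addr _ _); apply: leq_sum => B; rewrite inE; apply: large_fibre.
rewrite sum_card_frames_fibre leq_mul2r.
by rewrite (leq_trans (card_frames_le _ _) card_U) orbT.
Qed.

End Frames.

Local Close Scope ring_scope.

Theorem theorem2p2 (m n : nat) (U : {set 'cV['F_2]_n}) (y : 'cV['F_2]_m) (r : nat) :
  #|U| = 2 ^ m -> (0%R : 'cV['F_2]_n) \notin U ->
  (prob_Zy_gt U y r <=
   (\prod_(j < ceil_log2 (r + 2)) ((r + 2)%:R - 2%:R ^+ j : rat))^-1)%R.
Proof.
move=> card_U U0; set a := ceil_log2 (r + 2).
have pow_lt j : j < a -> 2 ^ j < r + 2 by apply: ltn_expn_up_log.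
set P := \prod_(j < a) (r + 2 - 2 ^ j).
have P_gt0 : 0 < P by apply: prodn_gt0 => j; rewrite subn_gt0 pow_lt.
have -> : (\prod_(j < a) ((r + 2)%:R - 2%:R ^+ j : rat) = P%:R)%R.
  by rewrite natr_prod; apply: eq_bigr => j _; rewrite natrB ?natrX // ltnW ?pow_lt.
have card_Ua : #|U| ^ a <= #|{: 'M['F_2]_(m, a)}|.
  by rewrite card_mx card_Fp // card_U -expnM.
have := card_large_fibre_mul_prod_le y r.+1 U0 card_Ua.
rewrite card_Fp // addn1 -[r.+2]addn2 -/P => card_large.
rewrite /prob_Zy_gt ler_pdivrMr ?ltr0n; last by apply/card_gt0P; exists 0%R.
by rewrite mulrC ler_pdivlMr ?ltr0n // -natrM ler_nat.
Qed.
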